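(* A linear map $T:\mathbb C^d\to\mathbb C^d$ ($d$ a positive integer) is recurrent if and only if it is similar to a diagonal matrix all of whose diagonal entries have modulus $1$.
   Context: $T$ is recurrent if for every non-empty open $U\subset\mathbb C^d$ there is a positive integer $k$ with $U\cap T^{-k}(U)\neq\emptyset$. *)

From HB Require Import structures.
From mathcomp Require Import all_boot all_order all_algebra.
From mathcomp Require Import complex.
From mathcomp Require Import all_classical all_reals all_analysis.
Set Implicit Arguments. Unset Strict Implicit. Unset Printing Implicit Defensive.
Import Order.TTheory GRing.Theory Num.Theory.
Import numFieldNormedType.Exports.
Local Open Scope classical_set_scope.
Local Open Scope ring_scope.

(* The complex numbers, seen as a numClosedFieldType so that the canonical
   (modulus-induced) topology of MathComp-Analysis applies. *)
Definition Cplx (R : realType) : numClosedFieldType := R[i].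

(* The linear map T : C^d -> C^d is represented by a matrix acting on row
   vectors: x |-> x *m T.  C^d carries the (product = Euclidean) topology. *)
Definition lin_of_mx (R : realType) (d : nat) (T : 'M[Cplx R]_d)
  : 'rV[Cplx R]_d -> 'rV[Cplx R]_d := fun x => x *m T.

Definition recurrent (R : realType) (d : nat) (T : 'M[Cplx R]_d) : Prop :=
  forall U : set 'rV[Cplx R]_d, open U -> U !=set0 ->
    exists k : nat, (0 < k)%N /\ U `&` (iter k (lin_of_mx T) @^-1` U) !=set0.

Definition similar_to_unimodular_diag (R : realType) (d : nat) (T : 'M[Cplx R]_d)
  : Prop :=
  exists (P : 'M[Cplx R]_d) (D : 'rV[Cplx R]_d),
    P \in unitmx /\ (forall j, `|D 0 j| = 1) /\ T = invmx P *m diag_mx D *m P.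

From HB Require Import structures.
From mathcomp Require Import all_boot all_order all_algebra complex.
From mathcomp Require Import all_classical all_reals all_analysis.
From mathcomp Require Import ring lra.

Set Implicit Arguments.
Unset Strict Implicit.
Unset Printing Implicit Defensive.
Import Order.TTheory GRing.Theory Num.Theory.
Import numFieldNormedType.Exports.
Local Open Scope ring_scope.
Local Open Scope classical_set_scope.

(* The map x |-> xP is a homeomorphism of C^d, so recurrence is invariant
   under similarity.  If T is recurrent and T w = l w with w <> 0, the linear
   functional f(x) = xw satisfies f(xT^k) = l^k f(x), and orbits returning to
   the open set {|f - 1| < r} for every r force |l| = 1.  A Jordan chain
   T w1 = l w1, T w2 = l w2 + w1 is impossible, because then the functional of
   w2 grows like k f(x) along orbits.  Hence the minimal polynomial of T has
   simple roots and T is diagonalizable, with unimodular eigenvalues.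
   Conversely, for a diagonal matrix D with unimodular entries, a pigeonhole
   argument on a grid of the torus (simultaneous Dirichlet approximation)
   gives k >= 1 with D^k uniformly close to the identity, so every point of
   an open set returns into it. *)

Lemma perm_eq_dup (T : eqType) (s : seq T) :
  ~~ uniq s -> exists z s', perm_eq s [:: z, z & s'].
Proof.
elim: s => // x t IH /=; rewrite negb_and negbK => /orP[xt | /IH[z [s' p]]].
  by exists x, (rem x t); rewrite perm_cons perm_to_rem.
exists z, (x :: s'); apply: perm_trans (_ : perm_eq _ (x :: [:: z, z & s'])) _.
  by rewrite perm_cons.
by rewrite (perm_catCA [:: x] [:: z; z] s').
Qed.

Lemma pigeonhole_nat (T : finType) (f : nat -> T) :
  exists a b, (a < b)%N /\ f a = f b.
Proof.
apply: boolp.contrapT => noeq.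
have inj : injective (fun i : 'I_#|T|.+1 => f i).
  move=> i j fij; apply/val_inj => /=.
  by case: (ltngtP i j) => // ij; case: noeq; [exists i, j | exists j, i].
by have := leq_card _ inj; rewrite card_ord ltnn.
Qed.

Lemma eq1_of_returns (R : realFieldType) (n : R) : 0 <= n ->
  (forall r, 0 < r -> exists2 k, (0 < k)%N &
     exists s, `|s - 1| < r /\ `|n ^+ k * s - 1| < r) -> n = 1.
Proof.
move=> n0 hret; apply/eqP; apply: contraT => n1.
(* r is chosen so that n (1 + r) = 1 - r if n < 1, and n (1 - r) = 1 + r if n > 1. *)
pose r := `|n - 1| / (n + 1).
have rE : r * (n + 1) = `|n - 1| by rewrite mulfVK // gt_eqF //; lra.
have [|[|k] // _ [s [s1 ns1]]] := hret r.
  by apply: divr_gt0; rewrite ?normr_gt0 ?subr_eq0 //; lra.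
move: s1 ns1; rewrite !ltr_norml exprS => /andP[s1 s2] /andP[t1 t2].
have r1 : r <= 1.
  have : `|n - 1| <= n + 1 by rewrite ler_norml; apply/andP; split; lra.
  by rewrite -rE; nra.
have s0 : 0 <= s by lra.
move: n1; rewrite neq_lt => /orP[] nlt.
- have : n * n ^+ k * s <= n * s.
    by rewrite -mulrA ler_wpM2l // ler_piMl // exprn_ile1 // ltW.
  move: rE; rewrite ltr0_norm ?subr_lt0 //; nra.
- have : n * s <= n * n ^+ k * s.
    by rewrite -mulrA ler_wpM2l ?ler_peMl ?exprn_ege1 //; lra.
  move: rE; rewrite gtr0_norm ?subr_gt0 //; nra.
Qed.

Lemma diagonalizable_of_ker_sqr (F : closedFieldType) n (T : 'M[F]_n.+1) :
  (forall z (w : 'cV_n.+1),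
     (T - z%:M) *m ((T - z%:M) *m w) = 0 -> (T - z%:M) *m w = 0) ->
  diagonalizable T.
Proof.
move=> hker; have [s] := closed_field_poly_normal (mxminpoly T).
rewrite (monicP (mxminpoly_monic T)) scale1r => minE.
apply/diagonalizableP; exists s; last by rewrite minE.
(* A repeated root z would make ('X - z) q, of smaller degree, annihilate T. *)
apply/negP => /negP /perm_eq_dup[z [s' /(perm_big _) sE]].
set q := \prod_(j <- s') ('X - j%:P).
have {}minE : mxminpoly T = ('X - z%:P) * (('X - z%:P) * q).
  by rewrite minE sE !big_cons.
have q1_monic : ('X - z%:P) * q \is monic.
  by rewrite monicMl ?monicXsubC // monic_prod_XsubC.
set A := T - z%:M; pose Q := horner_mx T q.
have AE p : horner_mx T (('X - z%:P) * p) = A *m horner_mx T p.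
  by rewrite rmorphM rmorphB /= horner_mx_X horner_mx_C mulmxE.
have AAQ : A *m (A *m Q) = 0 by rewrite -!AE -minE mx_root_minpoly.
have AQ : A *m Q = 0.
  apply/matrixP => i j; have := hker z (Q *m delta_mx j 0).
  rewrite -/A !mulmxA -(mulmxA A A Q) AAQ mul0mx => /(_ erefl).
  by rewrite -colE => /(congr1 (fun M : 'cV_n.+1 => M i 0)); rewrite !mxE.
have /mxminpoly_min : horner_mx T (('X - z%:P) * q) = 0 by rewrite AE.
move=> /(dvdp_leq (monic_neq0 q1_monic)).
by rewrite minE size_monicM ?monicXsubC ?monic_neq0 // size_XsubC ltnn.
Qed.

Lemma mul_diag_mx_delta (F : pzSemiRingType) n (D : 'rV[F]_n) j :
  diag_mx D *m delta_mx j 0 = D 0 j *: (delta_mx j 0 : 'cV_n).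
Proof.
apply/matrixP => i k; rewrite mul_diag_mx !mxE ord1 eqxx !andbT.
by case: eqP => [->|]; rewrite ?mulr1 ?mulr0.
Qed.

Lemma delta_mx_neq0 (F : nzRingType) m n (i : 'I_m) (j : 'I_n) :
  delta_mx i j != 0 :> 'M[F]_(m, n).
Proof. by apply/eqP => /matrixP/(_ i j)/eqP; rewrite !mxE !eqxx oner_eq0. Qed.

Section ComplexModulus.
Variable R : realType.
Local Notation C := (Cplx R).

(* The modulus as an element of R, so that [lra] and [nra] apply; the norm
   [`|z|] of [Cplx R] is a complex number. *)
Definition cmod (z : C) : R := Normc.normc (z : R[i]).

Lemma norm_cmod (z : C) : `|z| = (cmod z)%:C%C.
Proof. by rewrite /cmod normc_def; case: z. Qed.

Lemma cmod_ge0 z : 0 <= cmod z.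
Proof. by case: z => a b; apply: sqrtr_ge0. Qed.

Lemma cmodM (a b : C) : cmod (a * b) = cmod a * cmod b.
Proof. exact: Normc.normcM. Qed.

Lemma ler_cmodD (a b : C) : cmod (a + b) <= cmod a + cmod b.
Proof. exact: le_normcD. Qed.

Lemma cmodN (a : C) : cmod (- a) = cmod a.
Proof. exact: normcN. Qed.

Lemma cmod0 : cmod 0 = 0.
Proof. exact: Normc.normc0. Qed.

Lemma cmod1 : cmod 1 = 1.
Proof. exact: Normc.normc1. Qed.

Lemma cmodX (a : C) k : cmod (a ^+ k) = cmod a ^+ k.
Proof. by elim: k => [|k IH]; rewrite ?expr0 ?cmod1 // !exprS cmodM IH. Qed.

Lemma cmod_natr k : cmod k%:R = k%:R.
Proof. by rewrite /cmod -[k%:R]/(1 *+ k) normcMn Normc.normc1. Qed.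

Lemma cmodBC (a b : C) : cmod (a - b) = cmod (b - a).
Proof. by rewrite -cmodN opprB. Qed.

Lemma ler_cmod_sub (a b : C) : cmod a - cmod b <= cmod (a + b).
Proof. by have := ler_cmodD (a + b) (- b); rewrite addrK cmodN; lra. Qed.

Lemma ler_cmod_sum (I : finType) (F : I -> C) :
  cmod (\sum_i F i) <= \sum_i cmod (F i).
Proof.
elim/big_ind2: _ => [|a1 a2 b1 b2 h1 h2|//]; first by rewrite cmod0.
exact: le_trans (ler_cmodD _ _) (lerD h1 h2).
Qed.

Lemma cmod_Re (z : C) : `|complex.Re (z : R[i])| <= cmod z.
Proof.
case: z => a b; rewrite /cmod /= -sqrtr_sqr ler_sqrt ?addr_ge0 ?sqr_ge0 //.
by rewrite lerDl sqr_ge0.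
Qed.

Lemma cmod_Im (z : C) : `|complex.Im (z : R[i])| <= cmod z.
Proof.
case: z => a b; rewrite /cmod /= -sqrtr_sqr ler_sqrt ?addr_ge0 ?sqr_ge0 //.
by rewrite lerDr sqr_ge0.
Qed.

Lemma cmod_le_ReIm (z : C) :
  cmod z <= `|complex.Re (z : R[i])| + `|complex.Im (z : R[i])|.
Proof.
case: z => a b; rewrite /cmod /= -[X in _ <= X]ger0_norm ?addr_ge0 //.
rewrite -sqrtr_sqr ler_sqrt ?sqr_ge0 // -[a ^+ 2]real_normK ?num_real //.
rewrite -[b ^+ 2]real_normK ?num_real //.
by have := normr_ge0 a; have := normr_ge0 b; nra.
Qed.

Lemma ler_cmod_dist (a b : C) : `|cmod a - cmod b| <= cmod (a - b).
Proof.
have := ler_cmodD (a - b) b; have := ler_cmodD (b - a) a.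
by rewrite !subrK (cmodBC b) ler_norml => *; apply/andP; split; lra.
Qed.

Lemma lt_norm_cmod (a : C) (r : R) : (`|a| < r%:C%C) = (cmod a < r).
Proof. by rewrite norm_cmod ltcR. Qed.

Lemma norm_eq1_cmod (z : C) : `|z| = 1 <-> cmod z = 1.
Proof. by rewrite norm_cmod; split => [[]|->]. Qed.

End ComplexModulus.

Section SimultaneousDirichlet.
Variable R : realType.
Local Notation C := (Cplx R).

(* For t in [-1, 1], the index of the interval of length 1/N containing t. *)
Definition cell (N : nat) (t : R) : 'I_(N.*2).+1 := inord (Num.truncn ((t + 1) * N%:R)).

Definition ccell N (z : C) :=
  (cell N (complex.Re (z : R[i])), cell N (complex.Im (z : R[i]))).

Lemma cell_val N (t : R) : -1 <= t <= 1 ->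
  (cell N t : nat) = Num.truncn ((t + 1) * N%:R).
Proof.
move=> /andP[t1 t2]; have N0 : 0 <= (N%:R : R) by [].
rewrite inordK // truncn_lt_nat ?mulr_ge0 //; last by lra.
have tN : (t + 1) * N%:R <= 2 * N%:R by rewrite ler_wpM2r //; lra.
by rewrite -natr1 -addnn natrD; lra.
Qed.

Lemma cell_close N (t s : R) : -1 <= t <= 1 -> -1 <= s <= 1 ->
  cell N t = cell N s -> `|t - s| * N%:R < 1.
Proof.
move=> t1 s1 /(congr1 (@nat_of_ord _)); rewrite !cell_val // => ts.
move: t1 s1 => /andP[t1 t2] /andP[s1 s2].
have N0 : 0 <= (N%:R : R) by [].
have t0 : 0 <= (t + 1) * N%:R by rewrite mulr_ge0 //; lra.
have s0 : 0 <= (s + 1) * N%:R by rewrite mulr_ge0 //; lra.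
have /andP[ta tb] := truncn_itv t0.
have /andP[sa sb] := truncn_itv s0.
rewrite ts -natr1 in ta tb; rewrite -natr1 in sb.
rewrite -(ger0_norm N0) -normrM ltr_norml.
have -> : (t - s) * N%:R = (t + 1) * N%:R - (s + 1) * N%:R by ring.
by apply/andP; split; lra.
Qed.

Lemma ccell_close N (u v : C) : cmod u = 1 -> cmod v = 1 ->
  ccell N u = ccell N v -> cmod (u - v) * N%:R < 2.
Proof.
move=> u1 v1 [eRe eIm].
have unit_bound (z : C) (p : R) : cmod z = 1 -> `|p| <= cmod z -> -1 <= p <= 1.
  by move=> z1; rewrite z1 ler_norml.
have := cell_close (unit_bound _ _ u1 (cmod_Re u)) (unit_bound _ _ v1 (cmod_Re v)) eRe.
have := cell_close (unit_bound _ _ u1 (cmod_Im u)) (unit_bound _ _ v1 (cmod_Im v)) eIm.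
have := cmod_le_ReIm (u - v); have N0 : 0 <= (N%:R : R) by [].
case: u v {u1 v1 eRe eIm} => a b [c e] /= hle hIm hRe.
by apply: le_lt_trans (ler_wpM2r N0 hle) _; rewrite mulrDl; lra.
Qed.

Lemma simultaneous_dirichlet (I : finType) (u : I -> C) (delta : R) :
  (forall i, cmod (u i) = 1) -> 0 < delta ->
  exists2 k, (0 < k)%N & forall i, cmod (u i ^+ k - 1) < delta.
Proof.
move=> u1 delta0; pose N := (Num.truncn (2 / delta)).+1.
have N0 : 0 < (N%:R : R) by rewrite ltr0n.
have deltaN : 2 < delta * N%:R by rewrite mulrC -ltr_pdivrMr // truncnS_gt.
pose g k : {ffun I -> 'I_(N.*2).+1 * 'I_(N.*2).+1} := [ffun i => ccell N (u i ^+ k)].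
have [a [b [ab gab]]] := pigeonhole_nat g.
exists (b - a)%N => [|i]; first by rewrite subn_gt0.
have := congr1 (fun f : {ffun I -> _} => f i) gab; rewrite /= !ffunE => eab.
have uk1 k : cmod (u i ^+ k) = 1 by rewrite cmodX u1 expr1n.
have := ccell_close (uk1 a) (uk1 b) eab.
have -> : u i ^+ a - u i ^+ b = u i ^+ a * (1 - u i ^+ (b - a)).
  by rewrite mulrBr mulr1 -exprD subnKC // ltnW.
rewrite cmodM uk1 mul1r cmodBC => close.
by rewrite -(ltr_pM2r N0); lra.
Qed.

End SimultaneousDirichlet.

Section RowTopology.
Variable R : realType.
Local Notation C := (Cplx R).

Lemma open_rowP d (U : set 'rV[C]_d) :
  open U <-> forall x, U x -> exists2 e : R, 0 < e &
    forall y : 'rV[C]_d, (forall j, cmod (x 0 j - y 0 j) < e) -> U y.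
Proof.
have ballE (x y : 'rV[C]_d) (e : C) :
    ball x e y <-> 0 < e /\ forall j, `|x 0 j - y 0 j| < e.
  rewrite /ball /= /mx_ball; split => -[e0 H]; split => //.
    by move=> j; have := H 0 j; rewrite -ball_normE.
  by move=> i j; rewrite ord1 -ball_normE; apply: H.
rewrite openE; split => [oU x Ux | H x /H[e e0 He]].
  have /nbhs_ballP[[a b] /=] := oU x Ux; rewrite ltcE /= => /andP[/eqP-> a0] He.
  exists a => // y Hy; apply/He/ballE; split; first by rewrite ltcR.
  by move=> j; rewrite lt_norm_cmod.
apply/nbhs_ballP; exists e%:C%C; first by rewrite /= ltcR.
move=> y /ballE[_ Hy].
by apply: He => j; rewrite -lt_norm_cmod.
Qed.

Lemma cmod_mulmx_le m n (A : 'rV[C]_m) (M : 'M[C]_(m, n)) (e : R) j :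
  (forall i, cmod (A 0 i) <= e) -> cmod ((A *m M) 0 j) <= e * \sum_i cmod (M i j).
Proof.
move=> Ae; rewrite mxE mulr_sumr; apply: le_trans (ler_cmod_sum _) _.
by apply: ler_sum => i _; rewrite cmodM ler_wpM2r ?cmod_ge0.
Qed.

Lemma open_mulmx_preimage m n (M : 'M[C]_(m, n)) (U : set 'rV[C]_n) :
  open U -> open [set x | U (x *m M)].
Proof.
move=> /open_rowP oU; apply/open_rowP => x /oU[e e0 He].
pose S j := \sum_i cmod (M i j).
have S0 j : 0 <= S j by rewrite sumr_ge0 // => i _; apply: cmod_ge0.
have K0 : 0 < 1 + \sum_j S j by rewrite ltr_pwDl // sumr_ge0.
exists (e / (1 + \sum_j S j)); first exact: divr_gt0.
move=> y xy; apply: He => j.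
have -> : (x *m M) 0 j - (y *m M) 0 j = ((x - y) *m M) 0 j by rewrite mulmxBl !mxE.
have xyK i : cmod ((x - y) 0 i) <= e / (1 + \sum_j S j) by rewrite !mxE; apply: ltW.
apply: le_lt_trans (cmod_mulmx_le M j xyK) _.
rewrite mulrAC ltr_pdivrMr // ltr_pM2l // (bigD1 j) //=.
have : 0 <= \sum_(k | k != j) S k by rewrite sumr_ge0.
rewrite /S; lra.
Qed.

Lemma open_functional_ball d (w : 'cV[C]_d) (a : C) (r : R) :
  open [set x : 'rV[C]_d | cmod ((x *m w) 0 0 - a) < r].
Proof.
have oV : open [set z : 'rV[C]_1 | cmod (z 0 0 - a) < r].
  apply/open_rowP => z zr; exists (r - cmod (z 0 0 - a)); first by rewrite subr_gt0.
  move=> y /(_ 0) zy /=; have := ler_cmodD (y 0 0 - z 0 0) (z 0 0 - a).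
  by rewrite addrA subrK (cmodBC (y 0 0)); lra.
exact: (@open_mulmx_preimage _ _ w _ oV).
Qed.

End RowTopology.

Section Recurrence.
Variable R : realType.
Local Notation C := (Cplx R).

Lemma iter_lin_of_mx d (T : 'M[C]_d) k x : iter k (lin_of_mx T) x = x *m T ^+ k.
Proof.
elim: k => [|k IH]; first by rewrite expr0 mulmx1.
by rewrite iterS IH /lin_of_mx exprSr mulmxA.
Qed.

Lemma row_dual_exists d (w : 'cV[C]_d) : w != 0 -> exists x : 'rV_d, (x *m w) 0 0 = 1.
Proof.
move=> w0; have [i wi] : exists i, w i 0 != 0.
  apply/existsP; apply: contraNT w0; rewrite negb_exists => /forallP wi.
  by apply/eqP/colP => i; rewrite mxE; apply/eqP; have := wi i; rewrite negbK.
exists ((w i 0)^-1 *: (delta_mx 0 i : 'rV_d)).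
by rewrite -scalemxAl -rowE !mxE mulVf.
Qed.

Lemma eigenvectorX d (T : 'M[C]_d) (w : 'cV[C]_d) (l : C) k :
  T *m w = l *: w -> T ^+ k *m w = l ^+ k *: w.
Proof.
move=> Tw; elim: k => [|k IH]; first by rewrite !expr0 mul1mx scale1r.
by rewrite exprS -mulmxE -mulmxA IH -scalemxAr Tw scalerA -exprSr exprS.
Qed.

Lemma recurrent_eigen_unimodular d (T : 'M[C]_d) (w : 'cV[C]_d) (l : C) :
  recurrent T -> w != 0 -> T *m w = l *: w -> cmod l = 1.
Proof.
move=> rT /row_dual_exists[x0 x0w] Tw; apply: eq1_of_returns (cmod_ge0 l) _ => r r0.
have [|k [k0 [x [/= xw xTw]]]] := rT _ (@open_functional_ball _ _ w 1 r).
  by exists x0; rewrite /= x0w subrr cmod0.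
exists k => //; exists (cmod ((x *m w) 0 0)).
move: xTw; rewrite /preimage /= iter_lin_of_mx -mulmxA (eigenvectorX _ Tw).
rewrite -scalemxAr mxE.
rewrite -cmod1 -cmodX -cmodM => xTw.
by split; apply: le_lt_trans (ler_cmod_dist _ _) _.
Qed.

Lemma Jordan_chainX d (T : 'M[C]_d) (w1 w2 : 'cV[C]_d) (l : C) k :
  T *m w1 = l *: w1 -> T *m w2 = l *: w2 + w1 ->
  T ^+ k.+1 *m w2 = l ^+ k.+1 *: w2 + (k.+1%:R * l ^+ k) *: w1.
Proof.
move=> Tw1 Tw2; elim: k => [|k IH]; first by rewrite expr1 Tw2 expr0 mulr1 scale1r.
rewrite exprS -mulmxE -mulmxA IH mulmxDr -!scalemxAr Tw2 Tw1 scalerDr !scalerA.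
rewrite -addrA -scalerDl; congr (_ *: _ + _ *: _).
  by rewrite -exprSr.
by rewrite !exprS -[k.+2]addn1 natrD; ring.
Qed.

Lemma recurrent_no_Jordan_chain d (T : 'M[C]_d) (w1 w2 : 'cV[C]_d) (l : C) :
  recurrent T -> w1 != 0 -> T *m w1 = l *: w1 -> T *m w2 = l *: w2 + w1 -> False.
Proof.
move=> rT w10 Tw1 Tw2; have l1 := recurrent_eigen_unimodular rT w10 Tw1.
have [x0 x0w1] := row_dual_exists w10.
(* w3 still satisfies T w3 = l w3 + w1 but its functional vanishes at x0,
   whereas along orbits it grows like k times the functional of w1. *)
pose w3 := w2 - (x0 *m w2) 0 0 *: w1.
have Tw3 : T *m w3 = l *: w3 + w1.
  by rewrite mulmxBr -scalemxAr Tw2 Tw1 scalerBr !scalerA mulrC addrAC.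
have x0w3 : (x0 *m w3) 0 0 = 0.
  have -> : (x0 *m w3) 0 0 = (x0 *m w2) 0 0 - (x0 *m w2) 0 0 * (x0 *m w1) 0 0.
    by rewrite mulmxBr -scalemxAr !mxE.
  by rewrite x0w1 mulr1 subrr.
pose U := [set x : 'rV_d | cmod ((x *m w1) 0 0 - 1) < 1/3] `&`
          [set x | cmod ((x *m w3) 0 0 - 0) < 1/3].
have oU : open U by apply: openI; apply: open_functional_ball.
have [|[|k] [// _ [x [[/= xw1 xw3] [_ xTw3]]]]] := rT U oU.
  by exists x0; split; rewrite /= ?x0w1 ?x0w3 subrr cmod0.
have xTw3E : ((x *m T ^+ k.+1) *m w3) 0 0 =
    (k.+1%:R * l ^+ k) * (x *m w1) 0 0 + l ^+ k.+1 * (x *m w3) 0 0.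
  by rewrite -mulmxA (Jordan_chainX _ Tw1 Tw3) mulmxDr -!scalemxAr addrC !mxE.
move: xTw3 xw3; rewrite /= -iterS iter_lin_of_mx xTw3E !subr0 => xTw3 xw3.
have := ler_cmod_sub ((k.+1%:R * l ^+ k) * (x *m w1) 0 0) (l ^+ k.+1 * (x *m w3) 0 0).
rewrite !cmodM !cmodX l1 !expr1n !mulr1 !mul1r cmod_natr.
have : 1 <= (k.+1%:R : R) by rewrite ler1n.
have := ler_cmod_dist ((x *m w1) 0 0) 1; rewrite cmod1 ler_norml => /andP[h _].
have := cmod_ge0 ((x *m w1) 0 0); nra.
Qed.

Lemma recurrent_ker_sqr d (T : 'M[C]_d) : recurrent T -> forall z (w : 'cV[C]_d),
  (T - z%:M) *m ((T - z%:M) *m w) = 0 -> (T - z%:M) *m w = 0.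
Proof.
move=> rT z w AAw; apply/eqP; apply: contraT => Aw0.
have eigenE (u : 'cV[C]_d) : T *m u = z *: u + (T - z%:M) *m u.
  by rewrite mulmxBl mul_scalar_mx addrC subrK.
have Tw1 : T *m ((T - z%:M) *m w) = z *: ((T - z%:M) *m w).
  by rewrite eigenE AAw addr0.
by case: (recurrent_no_Jordan_chain rT Aw0 Tw1 (eigenE w)).
Qed.

Lemma iter_lin_of_mx_intertwine m n (P : 'M[C]_(m, n)) (S : 'M[C]_m) (T : 'M[C]_n) k y :
  P *m T = S *m P -> iter k (lin_of_mx T) (y *m P) = iter k (lin_of_mx S) y *m P.
Proof.
move=> PT; elim: k => [|k IH] //.
by rewrite !iterS IH /lin_of_mx -mulmxA PT mulmxA.
Qed.

Lemma recurrent_conj d (P S : 'M[C]_d) :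
  P \in unitmx -> recurrent S -> recurrent (invmx P *m S *m P).
Proof.
move=> Pu rS U oU [x Ux].
have PT : P *m (invmx P *m S *m P) = S *m P by rewrite !mulmxA mulmxV // mul1mx.
have [|k [k0 [y [Uy UTy]]]] := rS _ (@open_mulmx_preimage _ _ _ P _ oU).
  by exists (x *m invmx P); rewrite /= mulmxKV.
exists k; split=> //; exists (y *m P); split=> //.
by rewrite /preimage /= (iter_lin_of_mx_intertwine _ _ PT).
Qed.

Lemma iter_diag_mx d (D : 'rV[C]_d) k x j :
  (iter k (lin_of_mx (diag_mx D)) x) 0 j = x 0 j * D 0 j ^+ k.
Proof.
elim: k => [|k IH]; first by rewrite mulr1.
by rewrite iterS /lin_of_mx mul_mx_diag mxE IH exprSr mulrA.
Qed.

Lemma recurrent_unimodular_diag d (D : 'rV[C]_d) :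
  (forall j, cmod (D 0 j) = 1) -> recurrent (diag_mx D).
Proof.
move=> D1 U /open_rowP oU [x Ux]; have [e e0 He] := oU x Ux.
pose S := \sum_j cmod (x 0 j).
have xS j : cmod (x 0 j) <= S.
  by rewrite /S (bigD1 j) //= lerDl sumr_ge0 // => i _; apply: cmod_ge0.
have S0 : 0 < 1 + S by rewrite ltr_pwDl // sumr_ge0 // => i _; apply: cmod_ge0.
have [k k0 Dk] := simultaneous_dirichlet D1 (divr_gt0 e0 S0).
exists k; split=> //; exists x; split=> //; apply: He => j.
rewrite iter_diag_mx -{1}[x 0 j]mulr1 -mulrBr cmodM cmodBC.
apply: le_lt_trans (ler_wpM2l (cmod_ge0 _) (ltW (Dk j))) _.
rewrite mulrA ltr_pdivrMr // [_ * e]mulrC ltr_pM2l //.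
by have := xS j; lra.
Qed.

End Recurrence.

Theorem theorem4p1 (R : realType) (d : nat) (hd : (0 < d)%N) (T : 'M[Cplx R]_d) :
  recurrent T <-> similar_to_unimodular_diag T.
Proof.
split=> [rT | [P [D [Pu [D1 ->]]]]]; last first.
  by apply: recurrent_conj Pu (recurrent_unimodular_diag _) => j; apply/norm_eq1_cmod.
case: d hd T rT => // n _ T rT.
have [P Pu] := diagonalizable_of_ker_sqr (recurrent_ker_sqr rT).
move=> /(diagonalizable_forLR Pu)[D]; rewrite mxpoly.conjVmx // => TE.
have rD : recurrent (diag_mx D).
  have -> : diag_mx D = invmx (invmx P) *m T *m invmx P.
    by rewrite TE invmxK !mulmxA mulmxV // mul1mx mulmxK.
  by apply: recurrent_conj; rewrite ?unitmx_inv.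
exists P, D; split=> //; split=> // j; apply/norm_eq1_cmod.
exact: recurrent_eigen_unimodular rD (delta_mx_neq0 _ j 0) (mul_diag_mx_delta D j).
Qed.
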